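(* Let $G=K_n$ with $n\geq 3$, let $g:A\to B$ be a function with $I=g(A)$ and $s=|I|$ satisfying $2<s<n$. If $|g^{-1}(v)|=\frac{n}{s}$ for every $v\in I$, then $fix(F_G)=2(n-s)-1$.
   Context: A set $S\subseteq V(H)$ is a fixing set of a graph $H$ if the only automorphism of $H$ fixing every vertex of $S$ is the identity; $fix(H)$ is the minimum cardinality of a fixing set of $H$. Functigraph: let $G_1,G_2$ be disjoint copies of a connected graph $G$, with $A=V(G_1)$, $B=V(G_2)$, and let $g:A\to B$ be a function. The functigraph $F_G$ has vertex set $A\cup B$ and edge set $E(G_1)\cup E(G_2)\cup\{ug(u):u\in A\}$. *)

From mathcomp Require Import all_boot all_fingroup.
Set Implicit Arguments. Unset Strict Implicit. Unset Printing Implicit Defensive.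

Definition is_automorphism (T : finType) (e : rel T) (p : {perm T}) : bool :=
  [forall x, forall y, e (p x) (p y) == e x y].

Definition fixing_set (T : finType) (e : rel T) (S : {set T}) : bool :=
  [forall p : {perm T},
     (is_automorphism e p && [forall x in S, p x == x]) ==> (p == 1%g)].

(* fix(H): minimum cardinality of a fixing set (setT is always fixing). *)
Definition fixnum (T : finType) (e : rel T) : nat :=
  \big[minn/#|T|]_(S : {set T} | fixing_set e S) #|S|.

Definition complete_rel (n : nat) : rel 'I_n := fun x y => x != y.

(* Functigraph of (V, e) with respect to g : A -> B, where A = inl copy and
   B = inr copy of V. *)
Definition functigraph (V : finType) (e : rel V) (g : V -> V) : rel (V + V) :=
  fun x y =>
    match x, y with
    | inl a, inl b => e a b
    | inr a, inr b => e a b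
    | inl a, inr b => g a == b
    | inr b, inl a => g a == b
    end.

From mathcomp Require Import all_boot all_order all_fingroup zify.
Set Implicit Arguments. Unset Strict Implicit. Unset Printing Implicit Defensive.
Import Order.TTheory.

(* Two vertices
   of A with the same image under g are twins, and so are two vertices of B
   outside I; a fixing set must contain all but one vertex of every twin
   class.  The classes in A are the fibres of g, and those in B are the
   singletons of I together with B \ I, which gives
   |S| >= (n - |I|) + (n - |I| - 1).  Conversely, when every fibre has at
   least two points and |I| >= 3, fixing all of A except one representative
   of each fibre, and all of B \ I except one vertex b0, pins down every
   vertex: a vertex v of I is the only vertex adjacent to a fixed vertex of
   its fibre and to no fixed vertex of two other fibres, a representative a
   is recognised in the same way using the now fixed g(a), and b0 is the
   only vertex left. *)

Lemma fixnum_eq (T : finType) (e : rel T) m :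
  m <= #|T| -> (exists2 S, fixing_set e S & #|S| = m) ->
  (forall S, fixing_set e S -> m <= #|S|) -> fixnum e = m.
Proof.
move=> leT [S0 fS0 def_m] ge; apply/eqP; rewrite eqn_leq /fixnum; apply/andP; split.
  by rewrite -minEnat -def_m; exact: (bigmin_le_cond _ (fun S : {set T} => #|S|) fS0).
by elim/big_ind: _ => // a b le_a le_b; rewrite leq_min le_a.
Qed.

Lemma automorphism_rel (T : finType) (e : rel T) p x y :
  is_automorphism e p -> e (p x) (p y) = e x y.
Proof. by move=> /forallP/(_ x)/forallP/(_ y)/eqP. Qed.

Lemma tperm_automorphism (T : finType) (e : rel T) u w :
  symmetric e -> e u u = e w w ->
  (forall z, z != u -> z != w -> e u z = e w z) ->
  is_automorphism e (tperm u w).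
Proof.
move=> e_sym e_uw twin; apply/forallP => x; apply/forallP => y; apply/eqP.
have twin' z : z != u -> z != w -> e z u = e z w.
  by move=> zu zw; rewrite e_sym [e z w]e_sym twin.
case: tpermP => [->|->|/eqP xu /eqP xw]; case: tpermP => [->|->|/eqP yu /eqP yw];
  rewrite ?e_uw ?[e w u]e_sym //; by rewrite ?twin ?twin'.
Qed.

Lemma fixing_set_tperm (T : finType) (e : rel T) S u w :
  fixing_set e S -> is_automorphism e (tperm u w) -> u != w ->
  (u \in S) || (w \in S).
Proof.
move=> /forallP/(_ (tperm u w))/implyP fixS aut uw.
apply: contraTT uw; rewrite negb_or negbK => /andP [uS wS].
have /eqP/permP/(_ u) : tperm u w == 1%g.
  apply: fixS; rewrite aut; apply/forall_inP => x xS.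
  have ux : u != x by apply: contraNneq uS => ->.
  have wx : w != x by apply: contraNneq wS => ->.
  by rewrite tpermD.
by rewrite tpermL perm1 => ->.
Qed.

Section SumSet.
Variables U V : finType.

Definition sum_set (A : {set U}) (B : {set V}) : {set U + V} :=
  inl @: A :|: inr @: B.

Lemma inl_notin_inr_imset (B : {set V}) (a : U) : (inl a \in inr @: B) = false.
Proof. by apply/imsetP => -[]. Qed.

Lemma inr_notin_inl_imset (A : {set U}) (b : V) : (inr b \in inl @: A) = false.
Proof. by apply/imsetP => -[]. Qed.

Lemma in_sum_setl A B a : (inl a \in sum_set A B) = (a \in A).
Proof. by rewrite in_setU (mem_imset _ _ (@inl_inj U V)) inl_notin_inr_imset orbF. Qed.

Lemma in_sum_setr A B b : (inr b \in sum_set A B) = (b \in B).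
Proof. by rewrite in_setU (mem_imset _ _ (@inr_inj U V)) inr_notin_inl_imset. Qed.

Lemma card_sum_set A B : #|sum_set A B| = #|A| + #|B|.
Proof.
rewrite cardsU (card_imset _ (@inl_inj U V)) (card_imset _ (@inr_inj U V)).
suff -> : inl @: A :&: inr @: B = set0 by rewrite cards0 subn0.
apply/setP => -[a|b]; rewrite in_setI in_set0.
  by rewrite inl_notin_inr_imset andbF.
by rewrite inr_notin_inl_imset.
Qed.
End SumSet.

Section FunctigraphOfComplete.
Variables (n : nat) (g : 'I_n -> 'I_n).

Local Notation F := (functigraph (@complete_rel n) g).
Local Notation I := (g @: [set: 'I_n]).

Lemma functigraph_sym : symmetric F.
Proof. by case=> x [] y //=; rewrite /complete_rel eq_sym. Qed.

Lemma functigraph_irrefl x : F x x = false.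
Proof. by case: x => x /=; rewrite /complete_rel eqxx. Qed.

Lemma fibre_twins a1 a2 : g a1 = g a2 -> is_automorphism F (tperm (inl a1) (inl a2)).
Proof.
move=> g12; apply: tperm_automorphism; rewrite ?functigraph_irrefl //.
  exact: functigraph_sym.
case=> [a|b] /= a_a1 a_a2; last by rewrite g12.
have a1a : a1 != a by apply: contraNneq a_a1 => ->.
have a2a : a2 != a by apply: contraNneq a_a2 => ->.
by rewrite /complete_rel a1a a2a.
Qed.

Lemma outside_image_twins b1 b2 :
  b1 \notin I -> b2 \notin I -> is_automorphism F (tperm (inr b1) (inr b2)).
Proof.
move=> b1I b2I; apply: tperm_automorphism; rewrite ?functigraph_irrefl //.
  exact: functigraph_sym.
case=> [a|b] /= b_b1 b_b2.
  have gab1 : g a != b1 by apply: contraNneq b1I => <-; rewrite imset_f.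
  have gab2 : g a != b2 by apply: contraNneq b2I => <-; rewrite imset_f.
  by rewrite (negbTE gab1) (negbTE gab2).
have b1b : b1 != b by apply: contraNneq b_b1 => ->.
have b2b : b2 != b by apply: contraNneq b_b2 => ->.
by rewrite /complete_rel b1b b2b.
Qed.

Lemma fixing_set_inl_card S :
  fixing_set F S -> n - #|I| <= #|[set a | inl a \in S]|.
Proof.
move=> fixS; set SA := [set a | inl a \in S].
have inj_g : {in ~: SA &, injective g}.
  move=> a1 a2; rewrite !inE => a1S a2S g12; apply/eqP; apply: contraTT isT => a12.
  have a12' : inl a1 != inl a2 :> 'I_n + 'I_n by rewrite (inj_eq inl_inj).
  have := fixing_set_tperm fixS (fibre_twins g12) a12'.
  by rewrite (negbTE a1S) (negbTE a2S).
have : #|~: SA| <= #|I|.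
  rewrite -(card_in_imset inj_g); apply: subset_leq_card.
  by apply/subsetP => _ /imsetP [a _ ->]; rewrite imset_f.
by rewrite cardsCs setCK card_ord; lia.
Qed.

Lemma fixing_set_inr_card S :
  fixing_set F S -> n - #|I| - 1 <= #|[set b | inr b \in S] :\: I|.
Proof.
move=> fixS; set SB := [set b | inr b \in S].
have miss_le1 : #|~: I :\: SB| <= 1.
  apply/card_le1_eqP => b1 b2; rewrite !inE => /andP [b1S b1I] /andP [b2S b2I].
  apply/eqP; apply: contraTT isT => b21.
  have b12 : inr b1 != inr b2 :> 'I_n + 'I_n by rewrite (inj_eq inr_inj) eq_sym.
  have := fixing_set_tperm fixS (outside_image_twins b1I b2I) b12.
  by rewrite (negbTE b1S) (negbTE b2S).
rewrite setDE setIC; have := cardsID SB (~: I); have := cardsC I.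
by rewrite card_ord; lia.
Qed.

Lemma fixing_set_card S : fixing_set F S -> 2 * (n - #|I|) - 1 <= #|S|.
Proof.
move=> fixS; set SA := [set a | inl a \in S].
set SB := [set b | inr b \in S] :\: I.
have sub_S : #|sum_set SA SB| <= #|S|.
  apply/subset_leq_card/subsetP => -[a|b]; rewrite ?in_sum_setl ?in_sum_setr !inE //.
  by case/andP.
apply: leq_trans sub_S; rewrite card_sum_set.
apply: leq_trans (leq_add (fixing_set_inl_card fixS) (fixing_set_inr_card fixS)).
(* the two instances of #|I| agree only up to conversion, which lia ignores *)
by move: (#|I|) => s; lia.
Qed.

End FunctigraphOfComplete.

Section SmallFixingSet.
Variables (n : nat) (g : 'I_n -> 'I_n).

Local Notation F := (functigraph (@complete_rel n) g).
Local Notation I := (g @: [set: 'I_n]).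

Hypothesis fibre_gt1 : forall v, v \in I -> 1 < #|g @^-1: [set v]|.
Hypothesis image_gt2 : 2 < #|I|.

Definition representative v := odflt v [pick a | g a == v].

Lemma representativeK v : v \in I -> g (representative v) = v.
Proof.
case/imsetP => a _ ->; rewrite /representative.
by case: pickP => [x /eqP // | /(_ a)]; rewrite eqxx.
Qed.

Local Notation M := (representative @: I).

Lemma card_representatives : #|M| = #|I|.
Proof.
apply: card_in_imset => v1 v2 v1I v2I eq_rep.
by rewrite -(representativeK v1I) -(representativeK v2I) eq_rep.
Qed.

Lemma representatives_inj : {in M &, injective g}.
Proof.
move=> _ _ /imsetP [v1 v1I ->] /imsetP [v2 v2I ->].
by rewrite (representativeK v1I) (representativeK v2I) => ->.
Qed.

Lemma nonrepresentative_preimage v : v \in I -> exists2 x, g x = v & x \notin M.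
Proof.
move=> vI; have /card_gt1P [x [y [+ + xy]]] := fibre_gt1 vI.
rewrite !inE => /eqP gx /eqP gy.
case xM: (x \in M); last by exists x; rewrite ?xM.
case yM: (y \in M); last by exists y; rewrite ?yM.
by rewrite (representatives_inj xM yM) ?gx ?gy ?eqxx in xy.
Qed.

Lemma two_other_fibres v : exists x1 x2,
  [/\ x1 \notin M, x2 \notin M, g x1 != g x2, g x1 != v & g x2 != v].
Proof.
have : 1 < #|I :\ v|.
  have := cardsD1 v I; move: image_gt2.
  by case: (v \in I) => /=; lia.
case/card_gt1P => [v1 [v2 []]]; rewrite !inE => /andP [v1v v1I] /andP [v2v v2I] v12.
have [x1 gx1 x1M] := nonrepresentative_preimage v1I.
have [x2 gx2 x2M] := nonrepresentative_preimage v2I.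
by exists x1, x2; rewrite gx1 gx2.
Qed.

Variable b0 : 'I_n.
Hypothesis b0_notin_image : b0 \notin I.

Definition small_fixing_set := sum_set (~: M) (~: I :\ b0).

Lemma card_small_fixing_set : #|small_fixing_set| = 2 * (n - #|I|) - 1.
Proof.
rewrite card_sum_set; have := cardsD1 b0 (~: I); rewrite inE b0_notin_image.
have := cardsC I; have := cardsC M.
by rewrite card_ord card_representatives; lia.
Qed.

Section FixingAutomorphism.
Variable p : {perm 'I_n + 'I_n}.
Hypothesis p_aut : is_automorphism F p.
Hypothesis p_fix : forall x, x \in small_fixing_set -> p x = x.

Lemma perm_fix_nonrepresentative a : a \notin M -> p (inl a) = inl a.
Proof. by move=> aM; apply: p_fix; rewrite in_sum_setl inE. Qed.

Lemma perm_fix_image v : v \in I -> p (inr v) = inr v.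
Proof.
move=> vI; have [x gx xM] := nonrepresentative_preimage vI.
have [x1 [x2 [x1M x2M gx12 gx1v gx2v]]] := two_other_fibres v.
have := automorphism_rel (inr v) (inl x) p_aut.
have := automorphism_rel (inr v) (inl x1) p_aut.
have := automorphism_rel (inr v) (inl x2) p_aut.
rewrite !perm_fix_nonrepresentative //=.
case: (p (inr v)) => [a|b] /=; rewrite /complete_rel ?(negbTE gx1v) ?(negbTE gx2v).
  by move=> /negbFE/eqP -> /negbFE/eqP x12; rewrite x12 eqxx in gx12.
by rewrite gx eqxx => _ _ /eqP ->.
Qed.

Lemma perm_fix_inl a : p (inl a) = inl a.
Proof.
case aM: (a \in M); last by rewrite perm_fix_nonrepresentative ?aM.
have [x1 [x2 [x1M x2M gx12 _ _]]] := two_other_fibres (g a).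
have := automorphism_rel (inl a) (inl x1) p_aut.
have := automorphism_rel (inl a) (inl x2) p_aut.
have := automorphism_rel (inl a) (inr (g a)) p_aut.
rewrite (perm_fix_nonrepresentative x1M) (perm_fix_nonrepresentative x2M).
have gaI : g a \in I by rewrite imset_f ?inE.
rewrite (perm_fix_image gaI) /=.
have ax1 : a != x1 by apply: contraNneq x1M => <-; rewrite aM.
have ax2 : a != x2 by apply: contraNneq x2M => <-; rewrite aM.
case E: (p (inl a)) => [a'|b] /=; rewrite /complete_rel eqxx ?ax1 ?ax2; last first.
  by move=> _ /eqP <- /eqP gx2; rewrite gx2 eqxx in gx12.
move=> /eqP ga _ _; case a'M: (a' \in M).
  by rewrite (representatives_inj a'M aM ga).
have : p (inl a) = p (inl a') by rewrite E perm_fix_nonrepresentative ?a'M.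
by move/perm_inj => [->].
Qed.

Lemma perm_fix_except_b0 x : x != inr b0 -> p x = x.
Proof.
case: x => [a _ | b b_b0]; first exact: perm_fix_inl.
case bI: (b \in I); first exact: perm_fix_image.
apply: p_fix; rewrite in_sum_setr !inE bI andbT.
by apply: contraNneq b_b0 => ->.
Qed.

End FixingAutomorphism.

Lemma small_fixing_set_fixing : fixing_set F small_fixing_set.
Proof.
apply/forallP => p; apply/implyP => /andP [p_aut /forall_inP p_fix].
apply/eqP/(@perm_on_id _ _ [set inr b0]); last by rewrite cards1.
apply/subsetP => x; rewrite !inE; apply: contraR => x_b0.
by apply/eqP/perm_fix_except_b0 => // y /p_fix /eqP.
Qed.

End SmallFixingSet.

Theorem corollary3p4 (n : nat) (g : 'I_n -> 'I_n) :
  3 <= n ->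
  let I := [set g a | a in [set: 'I_n]] in
  let s := #|I| in
  2 < s -> s < n ->
  (forall v, v \in I -> #|g @^-1: [set v]| * s = n) ->
  fixnum (functigraph (@complete_rel n) g) = 2 * (n - s) - 1.
Proof.
move=> _ I s s_gt2 s_lt_n fibre_card.
have fibre_gt1 v : v \in I -> 1 < #|g @^-1: [set v]|.
  by move=> /fibre_card; nia.
have [b0 b0_notin_I] : exists b0, b0 \in ~: I.
  by apply/card_gt0P; have := cardsC I; rewrite card_ord -/s; lia.
rewrite in_setC in b0_notin_I; apply: fixnum_eq.
- by rewrite card_sum card_ord; lia.
- exists (small_fixing_set g b0); last exact: card_small_fixing_set.
  exact: small_fixing_set_fixing.
- exact: fixing_set_card.
Qed.
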